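(* In the power control setting described in the context, for every $i\in\mathcal{K}$, $u_i(\tilde{\underline{p}})\ge u_i(\underline{p}^* )$, where $\underline{p}^*=(p_1^*,\dots,p_K^* )$.
   Context: There are $K\ge2$ transmitters $i\in\mathcal{K}=\{1,\dots,K\}$; $\sigma^2>0$ is the noise variance; transmitter $i$ has channel gain $g_i$ with $|g_i|^2>0$, rate $R_i>0$, and power $p_i\in[0,P_i^{\max}]$. For a power profile $\underline{p}$, $\mathrm{SINR}_i=\frac{p_i|g_i|^2}{\sum_{j\neq i}p_j|g_j|^2+\sigma^2}$ and $u_i(\underline{p})=\frac{R_i f(\mathrm{SINR}_i)}{p_i}$, where $f$ is a common sigmoidal efficiency function with $f(0)=0$. Let $\beta^*$ be the unique positive solution of $xf'(x)-f(x)=0$, assumed to satisfy $(K-1)\beta^*<1$; the one-shot Nash equilibrium is $p_i^*=\frac{\sigma^2}{|g_i|^2}\frac{\beta^*}{1-(K-1)\beta^*}$ (all users get SINR $\beta^*$). It is assumed that there exists $x_0\in]0,\frac1{K-1}[$ such that $\frac{f''(x)}{f'(x)}-\frac{2(K-1)}{1-(K-1)x}$ is strictly positive on $]0,x_0[$ and strictly negative on $]x_0,\frac1{K-1}[$; then $\tilde\gamma$ is the unique solution in $]0,\frac1{K-1}[$ of $x[1-(K-1)x]f'(x)-f(x)=0$, and the operating point is $\tilde p_i=\frac{\sigma^2}{|g_i|^2}\frac{\tilde\gamma}{1-(K-1)\tilde\gamma}$ (all users get SINR $\tilde\gamma$). The maximal powers are large enough that $p_i^*,\tilde p_i\le P_i^{\max}$.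 *)

From HB Require Import structures.
From mathcomp Require Import all_boot all_order all_algebra.
From mathcomp Require Import all_classical all_reals all_analysis.
Set Implicit Arguments. Unset Strict Implicit. Unset Printing Implicit Defensive.
Import Order.TTheory GRing.Theory Num.Theory.
Import numFieldNormedType.Exports.
Local Open Scope classical_set_scope.
Local Open Scope ring_scope.

Section Power.
Variable R : realType.

(* h i stands for |g_i|^2 (only the squared modulus of the gain matters). *)
Definition SINR (K : nat) (sigma2 : R) (h p : 'I_K -> R) (i : 'I_K) : R :=
  p i * h i / (\sum_(j < K | j != i) p j * h j + sigma2).

Definition utility (K : nat) (sigma2 : R) (h Rate : 'I_K -> R) (f : R -> R)
  (p : 'I_K -> R) (i : 'I_K) : R :=
  Rate i * f (SINR sigma2 h p i) / p i.

Definition common_sinr_power (K : nat) (sigma2 : R) (h : 'I_K -> R) (c : R)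
  (i : 'I_K) : R :=
  sigma2 / h i * (c / (1 - (K.-1)%:R * c)).

Definition sigmoidal (f : R -> R) : Prop :=
  {within `[0, +oo[, continuous f} /\
  (forall x, 0 < x -> derivable f x 1 /\ derivable (derive1 f) x 1) /\
  (forall x, 0 < x -> 0 < derive1 f x) /\
  exists a, 0 < a /\ (forall x, 0 < x < a -> 0 < derive1 (derive1 f) x) /\
                     (forall x, a < x -> derive1 (derive1 f) x < 0).
End Power.

From HB Require Import structures.
From mathcomp Require Import all_boot all_order all_algebra.
From mathcomp Require Import all_classical all_reals all_analysis.
From mathcomp Require Import ring.
Import Order.TTheory GRing.Theory Num.Theory.
Import numFieldNormedType.Exports.
Local Open Scope classical_set_scope.
Local Open Scope ring_scope.

(* At a common SINR c every utility is a positive multiple of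
   [f c * (c^-1 - k)] with k = K - 1, whose derivative is
   [(c (1 - k c) f'(c) - f(c)) / c^2]; gamma is the only zero of this numerator
   in ]0, 1/k[.  The Nash SINR beta solves [x f'(x) = f(x)], which forces it
   beyond the inflection point of f; there [x f'(x) - f(x)] decreases, and
   comparing its values at beta and gamma gives gamma < beta.  The numerator is
   negative at beta, so by the intermediate value theorem and the uniqueness of
   gamma it is negative on ]gamma, beta]: the utility decreases from gamma to
   beta. *)

Definition tangent_gap {R : realType} (f : R -> R) (x : R) : R :=
  x * derive1 f x - f x.

Definition common_utility {R : realType} (f : R -> R) (k x : R) : R :=
  f x * (x^-1 - k).

Definition common_utility_gap {R : realType} (f : R -> R) (k x : R) : R :=
  x * (1 - k * x) * derive1 f x - f x.

Lemma tangent_gap_sub_common_utility_gap {R : realType} (f : R -> R) (k x : R) :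
  tangent_gap f x - common_utility_gap f k x = k * x ^+ 2 * derive1 f x.
Proof. by rewrite /tangent_gap /common_utility_gap; ring. Qed.

Lemma is_derive_derive1 {R : realType} {g : R -> R} {x dg : R} :
  is_derive x 1 g dg -> derive1 g x = dg.
Proof. by move=> gx; rewrite derive1E derive_val. Qed.

Lemma pos_derivable_within_continuous {R : realType} (g : R -> R)
    (i : interval R) :
  (forall x, 0 < x -> derivable g x 1) -> {subset i <= `]0, +oo[} ->
  {within [set` i], continuous g}.
Proof.
move=> dg i_pos; apply: derivable_within_continuous => x /i_pos.
by rewrite in_itv andbT => /dg.
Qed.

Section sigmoidal_shape.
Variables (R : realType) (f : R -> R) (a : R).
Local Notation f' := (derive1 f).
Local Notation f'' := (derive1 (derive1 f)).

Hypothesis a_gt0 : 0 < a.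
Hypothesis f_cont : {within `[0, +oo[, continuous f}.
Hypothesis f_derivable : forall x, 0 < x -> derivable f x 1.
Hypothesis f'_derivable : forall x, 0 < x -> derivable f' x 1.
Hypothesis f'_gt0 : forall x, 0 < x -> 0 < f' x.
Hypothesis f''_gt0 : forall x, 0 < x < a -> 0 < f'' x.
Hypothesis f''_lt0 : forall x, a < x -> f'' x < 0.
Hypothesis f0 : f 0 = 0.

Lemma is_derive_f {x : R} : 0 < x -> is_derive x 1 f (f' x).
Proof. by move=> /f_derivable fx; apply: DeriveDef; rewrite ?derive1E. Qed.

Lemma is_derive_f' {x : R} : 0 < x -> is_derive x 1 f' (f'' x).
Proof. by move=> /f'_derivable fx; apply: DeriveDef; rewrite ?derive1E. Qed.

Lemma is_derive_tangent_gap {x : R} : 0 < x ->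
  is_derive x 1 (tangent_gap f) (x * f'' x).
Proof.
move=> x0; have D := is_deriveB
  (is_deriveM (is_derive_id x 1) (is_derive_f' x0)) (is_derive_f x0).
by apply: (is_derive_eq D); rewrite [_%:A]mulr1 addrK.
Qed.

Lemma is_derive_common_utility (k : R) {x : R} : 0 < x ->
  is_derive x 1 (common_utility f k) (common_utility_gap f k x / x ^+ 2).
Proof.
move=> x0; have Vx := is_deriveV (f := id) (lt0r_neq0 x0) (is_derive_id x 1).
have D := is_deriveM (is_derive_f x0) (is_deriveB Vx (is_derive_cst k x 1)).
apply: (is_derive_eq D); rewrite /common_utility_gap /= [_%:A]mulr1 subr0.
rewrite /GRing.scale /=; have -> : ([eta GRing.inv] - cst k) x = x^-1 - k by [].
by field; rewrite gt_eqF.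
Qed.

Lemma tangent_gap_gt0 (x : R) : 0 < x <= a -> 0 < tangent_gap f x.
Proof.
case/andP=> x0 xa.
have f_cont0x : {within `[0, x], continuous f}.
  apply: continuous_subspaceW f_cont; apply: subset_itv; by rewrite ?bnd_simp.
have [c c0x fx] : exists2 c, c \in `]0, x[ & f x - f 0 = f' c * (x - 0).
  by apply: MVT f_cont0x => // y y0x; apply: is_derive_f; rewrite (itvP y0x).
have f'_incr : {in `]0, a] &, {homo f' : y z / y < z}}.
  apply: gtr0_derive1_lt_oc.
  - by move=> y /andP[y0 _]; apply: f'_derivable.
  - by move=> y y0a; apply: f''_gt0; rewrite (itvP y0a) (itvP y0a).
  - apply: pos_derivable_within_continuous => // y.
    by rewrite !in_itv /= => /andP[->].
move: c0x; rewrite in_itv /= => /andP[c0 c_x].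
have cx : f' c < f' x.
  by apply: f'_incr; rewrite // in_itv /= ?c0 ?x0 ?xa ?(le_trans (ltW c_x) xa).
have -> : tangent_gap f x = x * (f' x - f' c).
  by rewrite /tangent_gap -[f x]subr0 -f0 fx subr0; ring.
by rewrite mulr_gt0 // subr_gt0.
Qed.

Lemma tangent_gap_decr {x y : R} : a < x -> x < y ->
  tangent_gap f y < tangent_gap f x.
Proof.
move=> ax xy; have x0 : 0 < x := lt_trans a_gt0 ax.
have z0 z : z \in `]x, y[ -> 0 < z.
  by move=> zxy; rewrite (lt_trans x0) ?(itvP zxy).
apply: (@ltr0_derive1_lt_cc _ _ x y) => //; rewrite ?in_itv /= ?lexx ?ltW //.
- by move=> z /z0 /is_derive_tangent_gap [].
- move=> z zxy; rewrite (is_derive_derive1 (is_derive_tangent_gap (z0 _ zxy))).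
  by rewrite pmulr_rlt0 ?z0 // f''_lt0 // (lt_trans ax) ?(itvP zxy).
- apply: pos_derivable_within_continuous => [z /is_derive_tangent_gap [] //|].
  by move=> z; rewrite !in_itv /= andbT => /andP[/(lt_le_trans x0)].
Qed.

Variables (k beta gam : R).
Hypothesis k_gt0 : 0 < k.
Hypothesis beta_gt0 : 0 < beta.
Hypothesis tangent_gap_beta : tangent_gap f beta = 0.
Hypothesis k_beta_lt1 : k * beta < 1.
Hypothesis gam_gt0 : 0 < gam.
Hypothesis common_utility_gap_gam : common_utility_gap f k gam = 0.
Hypothesis common_utility_gap_uniq : forall x, 0 < x < 1 / k ->
  common_utility_gap f k x = 0 -> x = gam.

Lemma inflection_lt_beta : a < beta.
Proof.
rewrite ltNge; apply/negP => beta_a.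
have := tangent_gap_gt0 beta.
by rewrite beta_gt0 beta_a tangent_gap_beta ltxx => /(_ isT).
Qed.

Lemma gam_lt_beta : gam < beta.
Proof.
have tangent_gap_gam : 0 < tangent_gap f gam.
  have := tangent_gap_sub_common_utility_gap f k gam.
  by rewrite common_utility_gap_gam subr0 => ->; rewrite !mulr_gt0 ?f'_gt0.
rewrite ltNge le_eqVlt; apply/negP => /orP[/eqP beta_gam | beta_gam].
  by move: tangent_gap_gam; rewrite -beta_gam tangent_gap_beta ltxx.
have := tangent_gap_decr inflection_lt_beta beta_gam.
by rewrite tangent_gap_beta ltNge ltW.
Qed.

Lemma common_utility_gap_lt0 (x : R) : gam < x <= beta ->
  common_utility_gap f k x < 0.
Proof.
case/andP=> gam_x x_beta; have x0 : 0 < x := lt_trans gam_gt0 gam_x.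
have gap_beta : common_utility_gap f k beta < 0.
  have := tangent_gap_sub_common_utility_gap f k beta.
  rewrite tangent_gap_beta sub0r => /eqP; rewrite eqr_oppLR => /eqP ->.
  by rewrite oppr_lt0 !mulr_gt0 ?f'_gt0.
rewrite ltNge; apply/negP => gap_x.
have gap_derivable y : 0 < y -> derivable (common_utility_gap f k) y 1.
  move=> y0; have D := is_deriveB (is_deriveM (is_deriveM (is_derive_id y 1)
    (is_deriveB (is_derive_cst (1 : R) y 1) (is_deriveM (is_derive_cst k y 1)
    (is_derive_id y 1)))) (is_derive_f' y0)) (is_derive_f y0).
  by case: D.
have [c cxb gap_c] : exists2 c, c \in `[x, beta] & common_utility_gap f k c = 0.
  apply: IVT x_beta _ _; last first.
    by rewrite ge_min le_max gap_x (ltW gap_beta) orbT.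
  apply: pos_derivable_within_continuous => // y.
  by rewrite !in_itv /= andbT => /andP[/(lt_le_trans x0)].
move: cxb; rewrite in_itv /= => /andP[xc cb].
have c_range : 0 < c < 1 / k.
  by rewrite (lt_le_trans x0 xc) (le_lt_trans cb) // ltr_pdivlMr // mulrC.
by move: gam_x; rewrite -(common_utility_gap_uniq c c_range gap_c) ltNge xc.
Qed.

Lemma common_utility_beta_le_gam :
  common_utility f k beta <= common_utility f k gam.
Proof.
have z0 z : z \in `]gam, beta[ -> 0 < z.
  by move=> zgb; rewrite (lt_trans gam_gt0) ?(itvP zgb).
apply: (@ler0_derive1_le_cc _ _ gam beta);
  rewrite ?in_itv /= ?lexx ?ltW ?gam_lt_beta //.
- by move=> z /z0 /(is_derive_common_utility k) [].
- move=> z zgb.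
  rewrite (is_derive_derive1 (is_derive_common_utility k (z0 _ zgb))).
  rewrite ltW // pmulr_llt0 ?invr_gt0 ?exprn_gt0 ?z0 //.
  by apply: common_utility_gap_lt0; rewrite (itvP zgb) ltW ?(itvP zgb).
- apply: pos_derivable_within_continuous.
    by move=> z /(is_derive_common_utility k) [].
  by move=> z; rewrite !in_itv /= andbT => /andP[/(lt_le_trans gam_gt0)].
Qed.

End sigmoidal_shape.

Section common_sinr.
Variables (R : realType) (K : nat) (sigma2 : R) (h : 'I_K -> R) (c : R).
Hypothesis sigma2_gt0 : 0 < sigma2.
Hypothesis h_gt0 : forall j, 0 < h j.
Hypothesis c_lt : (K.-1)%:R * c < 1.

Local Notation p := (common_sinr_power sigma2 h c).

Lemma common_sinr_power_received (j : 'I_K) :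
  p j * h j = sigma2 * (c / (1 - (K.-1)%:R * c)).
Proof.
have := h_gt0 j; have : 0 < 1 - (K.-1)%:R * c by rewrite subr_gt0.
by rewrite /common_sinr_power => ? ?; field; rewrite !gt_eqF.
Qed.

Lemma SINR_common_sinr_power (i : 'I_K) : SINR sigma2 h p i = c.
Proof.
have interference : \sum_(j < K | j != i) p j * h j =
    (K.-1)%:R * (sigma2 * (c / (1 - (K.-1)%:R * c))).
  under eq_bigr do rewrite common_sinr_power_received.
  rewrite sumr_const.
  have -> : #|[pred j | j != i]| = K.-1.
    by rewrite -[in RHS](card_ord K) -(cardC1 i).
  by rewrite [RHS]mulr_natl.
have q_gt0 : 0 < 1 - (K.-1)%:R * c by rewrite subr_gt0.
rewrite /SINR interference common_sinr_power_received.
have -> : (K.-1)%:R * (sigma2 * (c / (1 - (K.-1)%:R * c))) + sigma2 =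
    sigma2 / (1 - (K.-1)%:R * c).
  by field; rewrite gt_eqF.
by field; rewrite !gt_eqF.
Qed.

Lemma utility_common_sinr_power (Rate : 'I_K -> R) (f : R -> R) (i : 'I_K) :
  0 < c -> utility sigma2 h Rate f p i =
  Rate i * h i / sigma2 * common_utility f (K.-1)%:R c.
Proof.
move=> c_gt0; have := h_gt0 i.
have : 0 < 1 - (K.-1)%:R * c by rewrite subr_gt0.
rewrite /utility SINR_common_sinr_power /common_utility /common_sinr_power.
by move=> ? ?; field; rewrite !gt_eqF.
Qed.

End common_sinr.

Theorem proposition7 (R : realType) (K : nat) (hK : (2 <= K)%N)
  (sigma2 : R) (hs : 0 < sigma2)
  (h Rate Pmax : 'I_K -> R)
  (hh : forall i, 0 < h i) (hR : forall i, 0 < Rate i)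
  (f : R -> R) (hf : sigmoidal f) (hf0 : f 0 = 0)
  (beta : R) (hb0 : 0 < beta) (hbeq : beta * derive1 f beta - f beta = 0)
  (hbuniq : forall x, 0 < x -> x * derive1 f x - f x = 0 -> x = beta)
  (hbK : (K.-1)%:R * beta < 1)
  (x0 : R) (hx0 : 0 < x0 < 1 / (K.-1)%:R)
  (hpos : forall x, 0 < x < x0 ->
     0 < derive1 (derive1 f) x / derive1 f x - 2 * (K.-1)%:R / (1 - (K.-1)%:R * x))
  (hneg : forall x, x0 < x < 1 / (K.-1)%:R ->
     derive1 (derive1 f) x / derive1 f x - 2 * (K.-1)%:R / (1 - (K.-1)%:R * x) < 0)
  (gam : R) (hg : 0 < gam < 1 / (K.-1)%:R)
  (hgeq : gam * (1 - (K.-1)%:R * gam) * derive1 f gam - f gam = 0)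
  (hguniq : forall x, 0 < x < 1 / (K.-1)%:R ->
     x * (1 - (K.-1)%:R * x) * derive1 f x - f x = 0 -> x = gam)
  (hPmax : forall i, common_sinr_power sigma2 h beta i <= Pmax i /\
                     common_sinr_power sigma2 h gam i <= Pmax i) :
  forall i : 'I_K,
    utility sigma2 h Rate f (common_sinr_power sigma2 h gam) i >=
    utility sigma2 h Rate f (common_sinr_power sigma2 h beta) i.
Proof.
move=> i.
have [f_cont [f_derivable [f'_gt0 [a [a_gt0 [f''_gt0 f''_lt0]]]]]] := hf.
have k_gt0 : 0 < (K.-1)%:R :> R by rewrite ltr0n -ltnS (ltn_predK hK).
have [gam_gt0 gam_lt] := andP hg.
have k_gam_lt1 : (K.-1)%:R * gam < 1 by rewrite mulrC -ltr_pdivlMr.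
rewrite /Order.ge /= !utility_common_sinr_power //.
rewrite ler_pM2l ?mulr_gt0 ?invr_gt0 //.
apply: (@common_utility_beta_le_gam R f a) => //.
- by move=> x /f_derivable [].
- by move=> x /f_derivable [].
Qed.
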